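(* Let $m\ge 1$ and let $s_1,\dots,s_{2m}$ be positive integers. Put $S=\sum_{i=1}^{2m}s_i$, $s_{\max}=\max_i s_i$, $M=S+1$, $d_i=s_{\max}-s_i$, and $\epsilon=\frac{1}{2M}$. Let $$P_R=\Big\{x\in\mathbb{R}^{2m}:\ 0\le x_i\le 1\ \forall i,\ \sum_{i=1}^{2m}(M+s_i)x_i\le \tfrac12 S+mM+\epsilon,\ \sum_{i=1}^{2m}(M+d_i)x_i\le \tfrac12\sum_{i=1}^{2m}d_i+mM+\epsilon\Big\}.$$ Suppose $\sum_{j=1}^{m}s_j=\frac S2$ (so that $\{s_1,\dots,s_m\}$ and $\{s_{m+1},\dots,s_{2m}\}$ form an exact partition). Let $v^*$ be a vertex of $P_R$ with exactly $2m-1$ coordinates in $\{0,1\}$, such that $\{j: v^*_j=1\}=\{1,\dots,m\}$ and whose unique fractional coordinate index $i$ (with $0<v^*_i<1$, necessarily $i\in\{m+1,\dots,2m\}$) satisfies $s_i=\frac{s_{\max}}{2}$. Then $v^*$ is degenerate: both knapsack inequalities are active at $v^*$ in addition to $2m-1$ box constraints, so $2m+1$ defining inequalities are active at $v^*$.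
   Context: The inequalities $0\le x_i\le1$ are the box constraints; the other two inequalities are the knapsack constraints. A vertex of $P_R$ is degenerate if more than $2m$ of the $4m+2$ defining inequalities are active at it. *)

From mathcomp Require Import all_boot all_order all_algebra.
From mathcomp Require Import reals.
Set Implicit Arguments. Unset Strict Implicit. Unset Printing Implicit Defensive.
Import Order.TTheory GRing.Theory Num.Theory.
Local Open Scope ring_scope.

(* Indices 1..2m of the paper are the ordinals 0..2m-1 of 'I_(2*m);
   paper index j in {1..m} corresponds to ordinal j-1 < m. *)

Section Knapsack.
Variables (R : realType) (m : nat) (s : 'I_(2 * m) -> nat).

Definition Ssum : nat := (\sum_(i < 2 * m) s i)%N.
Definition smax : nat := (\max_(i < 2 * m) s i)%N.
Definition Mbig : R := (Ssum + 1)%:R.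
(* d_i = s_max - s_i  (nonnegative, since s_i <= s_max) *)
Definition dd (i : 'I_(2 * m)) : nat := (smax - s i)%N.
Definition eps : R := 1 / (2 * Mbig).

Definition knap1_lhs (x : 'I_(2 * m) -> R) : R :=
  \sum_(i < 2 * m) (Mbig + (s i)%:R) * x i.
Definition knap1_rhs : R := (Ssum%:R) / 2 + m%:R * Mbig + eps.
Definition knap2_lhs (x : 'I_(2 * m) -> R) : R :=
  \sum_(i < 2 * m) (Mbig + (dd i)%:R) * x i.
Definition knap2_rhs : R :=
  (\sum_(i < 2 * m) (dd i)%:R) / 2 + m%:R * Mbig + eps.

Definition inPR (x : 'I_(2 * m) -> R) : Prop :=
  (forall i, 0 <= x i /\ x i <= 1) /\
  knap1_lhs x <= knap1_rhs /\ knap2_lhs x <= knap2_rhs.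

Definition is_vertex (x : 'I_(2 * m) -> R) : Prop :=
  inPR x /\
  forall (y z : 'I_(2 * m) -> R) (t : R),
    inPR y -> inPR z -> 0 < t -> t < 1 ->
    (forall i, x i = t * y i + (1 - t) * z i) ->
    forall i, y i = z i.

Definition n_active (x : 'I_(2 * m) -> R) : nat :=
  (#|[set i : 'I_(2 * m) | x i == 0%R]| + #|[set i : 'I_(2 * m) | x i == 1%R]|
   + (knap1_lhs x == knap1_rhs) + (knap2_lhs x == knap2_rhs))%N.

Definition degenerate (x : 'I_(2 * m) -> R) : Prop :=
  is_vertex x /\ (2 * m < n_active x)%N.

End Knapsack.

(* Writing the vertex as v = 1 on the first m coordinates, t at its fractional
   index i0 and 0 elsewhere, the balanced partition makes both knapsack slacks
   equal to eps - (M + s_i0) t; the second one only because s_i0 = s_max / 2,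
   which turns the coefficient M + d_i0 into M + s_i0 as well.  If this common
   slack were positive, moving t by a small amount in either direction would
   stay inside P_R and exhibit v as a midpoint, contradicting extremality. *)

From mathcomp Require Import all_boot all_order all_algebra.
From mathcomp Require Import reals.
From mathcomp Require Import lra zify.

Set Implicit Arguments.
Unset Strict Implicit.
Unset Printing Implicit Defensive.
Import Order.TTheory GRing.Theory Num.Theory.
Local Open Scope ring_scope.

Definition prefix_ones_at {R : pzSemiRingType} {n : nat}
    (m : nat) (i0 : 'I_n) (u : R) : 'I_n -> R :=
  fun j => if (j < m)%N then 1 else if j == i0 then u else 0.

Lemma sum_mul_prefix_ones_at (R : pzSemiRingType) (n m : nat) (i0 : 'I_n)
    (u : R) (a : 'I_n -> R) :
  (m <= i0)%N ->
  \sum_(j < n) a j * prefix_ones_at m i0 u j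
    = \sum_(j < n | (j < m)%N) a j + a i0 * u.
Proof.
move=> le_m_i0; rewrite (bigID (fun j : 'I_n => (j < m)%N)) /=; congr (_ + _).
  by apply: eq_bigr => j lt_j_m; rewrite /prefix_ones_at lt_j_m mulr1.
rewrite (bigD1 i0) /=; last by rewrite -leqNgt.
rewrite /prefix_ones_at ltnNge le_m_i0 eqxx /= big1 ?addr0 // => j /andP[].
by move=> /negbTE -> /negbTE ->; rewrite mulr0.
Qed.

Lemma sum_ord_lt_const (R : pzSemiRingType) (n m : nat) (a : R) :
  (m <= n)%N -> \sum_(j < n | (j < m)%N) a = a *+ m.
Proof. by move=> le_m_n; rewrite (big_ord_narrow le_m_n) sumr_const card_ord. Qed.

Lemma card_eq0_add_card_eq1 (R : nzRingType) (T : finType) (x : T -> R) :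
  (#|[set i | x i == 0%R]| + #|[set i | x i == 1%R]|)%N
    = #|[set i | (x i == 0) || (x i == 1)]|.
Proof.
rewrite -cardsUI.
have -> : [set i | x i == 0] :&: [set i | x i == 1] = set0.
  apply/setP => i; rewrite !inE; apply/negbTE/andP => -[/eqP -> ].
  by rewrite eq_sym oner_eq0.
by rewrite cards0 addn0; apply: eq_card => i; rewrite !inE.
Qed.

Lemma prefix_ones_at_of_support (R : numDomainType) (n m : nat)
    (x : 'I_n -> R) :
  (0 < n)%N -> (forall i, 0 <= x i /\ x i <= 1) ->
  #|[set i | (x i == 0) || (x i == 1)]| = n.-1 ->
  [set j | x j == 1] = [set j : 'I_n | (j < m)%N] ->
  exists2 i0 : 'I_n, (m <= i0)%N &
    [/\ 0 < x i0, x i0 < 1 & x =1 prefix_ones_at m i0 (x i0)].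
Proof.
move=> n_gt0 box card01 ones.
set A := [set i | _] in card01.
have /cards1P[i0 fracA] : #|~: A| == 1%N.
  by rewrite cardsCs setCK card_ord card01 -subn1 subKn.
have [frac01 in01] : ~~ ((x i0 == 0) || (x i0 == 1)) /\
    forall j, j != i0 -> (x j == 0) || (x j == 1).
  split; first by have := set11 i0; rewrite -fracA !inE.
  by move=> j; rewrite -in_set1 -fracA !inE negbK.
have one j : (x j == 1) = (j < m)%N by move/setP/(_ j): ones; rewrite !inE.
move: (frac01); rewrite negb_or => /andP[ne0 ne1].
have [ge0 le1] := box i0.
exists i0; first by rewrite leqNgt -one.
split; [by rewrite lt_def ne0 | by rewrite lt_def eq_sym ne1 |].
move=> j; rewrite /prefix_ones_at -one.
case: eqP => [// | /eqP x_ne1]; case: eqP => [-> // | /eqP ne_j_i0].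
by move: (in01 j ne_j_i0); rewrite (negbTE x_ne1) orbF => /eqP.
Qed.

Section FractionalVertex.
Variables (R : realType) (m : nat) (s : 'I_(2 * m) -> nat) (i0 : 'I_(2 * m)).
Hypothesis le_m_i0 : (m <= i0)%N.
Hypothesis balanced : (2 * (\sum_(j < 2 * m | (j < m)%N) s j) = Ssum s)%N.
Hypothesis half_smax : (2 * s i0 = smax s)%N.

Local Notation K := (Mbig R s + (s i0)%:R).
Local Notation frac_vec := (@prefix_ones_at R _ m i0).

Let le_m_2m : (m <= 2 * m)%N. Proof. by rewrite leq_pmull. Qed.

Let sum_s_halves : \sum_(j < 2 * m) ((s j)%:R : R)
  = 2 * \sum_(j < 2 * m | (j < m)%N) (s j)%:R.
Proof. by rewrite -!natr_sum -natrM balanced. Qed.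

Let natr_dd j : ((dd s j)%:R : R) = (smax s)%:R - (s j)%:R.
Proof. by rewrite natrB // leq_bigmax. Qed.

Lemma knap1_slack (x : 'I_(2 * m) -> R) (u : R) : x =1 frac_vec u ->
  knap1_lhs s x - knap1_rhs R s = K * u - eps R s.
Proof.
move=> x_eq; rewrite /knap1_lhs /knap1_rhs.
under eq_bigr do rewrite x_eq.
rewrite sum_mul_prefix_ones_at // big_split /= sum_ord_lt_const //.
rewrite -[Mbig R s *+ m]mulr_natr /Ssum natr_sum sum_s_halves; lra.
Qed.

Lemma knap2_slack (x : 'I_(2 * m) -> R) (u : R) : x =1 frac_vec u ->
  knap2_lhs s x - knap2_rhs R s = K * u - eps R s.
Proof.
move=> x_eq; rewrite /knap2_lhs /knap2_rhs.
under eq_bigr do rewrite x_eq.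
rewrite sum_mul_prefix_ones_at // big_split /= sum_ord_lt_const //.
rewrite !(eq_bigr _ (fun j _ => natr_dd j)) !sumrB sum_ord_lt_const //.
rewrite sumr_const card_ord natr_dd.
rewrite sum_s_halves -half_smax natrM -[_ *+ (2 * m)]mulr_natr natrM.
rewrite -[Mbig R s *+ m]mulr_natr -[2 * _ *+ m]mulr_natr.
lra.
Qed.

Lemma inPR_frac_vec (u : R) : 0 <= u -> u <= 1 -> K * u <= eps R s ->
  inPR s (frac_vec u).
Proof.
move=> u_ge0 u_le1 Ku_le; split; [|split].
- move=> j; rewrite /prefix_ones_at; case: ifP => _; first by rewrite ler01.
  by case: ifP => _; rewrite ?lexx.
- by rewrite -subr_le0 (knap1_slack (frefl (frac_vec u))) subr_le0.
- by rewrite -subr_le0 (knap2_slack (frefl (frac_vec u))) subr_le0.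
Qed.

Lemma vertex_frac_vec_tight (x : 'I_(2 * m) -> R) t :
  is_vertex s x -> x =1 frac_vec t -> 0 < t -> t < 1 -> K * t = eps R s.
Proof.
move=> [[_ [x_knap1 _]] x_extreme] x_eq t_gt0 t_lt1.
have K_gt0 : 0 < K by rewrite ltr_wpDr // ltr0n addn1.
apply/eqP; rewrite eq_le -subr_le0 -(knap1_slack x_eq) subr_le0 x_knap1 /=.
rewrite leNgt; apply/negP => slack_gt0.
set g := (eps R s - K * t) / K.
have Kg : K * g = eps R s - K * t by rewrite /g mulrC divfK // gt_eqF.
have g_gt0 : 0 < g by rewrite divr_gt0 // subr_gt0.
set d := Num.min t (Num.min (1 - t) g).
have d_gt0 : 0 < d by rewrite !lt_min t_gt0 g_gt0 subr_gt0 t_lt1.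
have d_le_t : d <= t by rewrite ge_min lexx.
have d_le_1t : d <= 1 - t by rewrite !ge_min lexx orbT.
have Kd_le : K * d <= K * g by rewrite ler_pM2l // !ge_min lexx !orbT.
have Kd_ge0 : 0 <= K * d by rewrite mulr_ge0 // ltW.
have inPR_up : inPR s (frac_vec (t + d)).
  by apply: inPR_frac_vec; rewrite ?mulrDr; lra.
have inPR_down : inPR s (frac_vec (t - d)).
  by apply: inPR_frac_vec; rewrite ?mulrBr; lra.
have x_mid j :
    x j = 1 / 2 * frac_vec (t + d) j + (1 - 1 / 2) * frac_vec (t - d) j.
  by rewrite x_eq /prefix_ones_at; case: ifP => _; [|case: ifP => _]; lra.
have half_gt0 : 0 < 1 / 2 :> R by lra.
have half_lt1 : 1 / 2 < 1 :> R by lra.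
have := x_extreme _ _ _ inPR_up inPR_down half_gt0 half_lt1 x_mid i0.
by rewrite /prefix_ones_at ltnNge le_m_i0 eqxx /=; lra.
Qed.

End FractionalVertex.

Theorem theorem1 (R : realType) (m : nat) (hm : (1 <= m)%N)
  (s : 'I_(2 * m) -> nat) (hs : forall i, (0 < s i)%N)
  (hpart : (2 * (\sum_(j < 2 * m | (j < m)%N) s j) = Ssum s)%N)
  (v : 'I_(2 * m) -> R) (hv : is_vertex s v)
  (h01 : #|[set i : 'I_(2 * m) | (v i == 0%R) || (v i == 1%R)]| = (2 * m - 1)%N)
  (hones : [set j : 'I_(2 * m) | v j == 1%R] = [set j : 'I_(2 * m) | (j < m)%N])
  (hfrac : forall i : 'I_(2 * m), 0 < v i -> v i < 1 -> (2 * s i = smax s)%N) :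
  knap1_lhs s v = knap1_rhs R s /\ knap2_lhs s v = knap2_rhs R s /\
  n_active s v = (2 * m + 1)%N /\ degenerate s v.
Proof.
have [[box _] _] := hv.
have [i0 le_m_i0 [t_gt0 t_lt1 v_eq]] : exists2 i0 : 'I_(2 * m), (m <= i0)%N &
    [/\ 0 < v i0, v i0 < 1 & v =1 prefix_ones_at m i0 (v i0)].
  by apply: prefix_ones_at_of_support => //; rewrite ?h01 ?subn1 ?muln_gt0.
have half_smax := hfrac i0 t_gt0 t_lt1.
have tight := vertex_frac_vec_tight le_m_i0 hpart half_smax hv v_eq t_gt0 t_lt1.
have knap1_tight : knap1_lhs s v = knap1_rhs R s.
  by apply/eqP; rewrite -subr_eq0 (knap1_slack le_m_i0 hpart v_eq) tight subrr.
have knap2_tight : knap2_lhs s v = knap2_rhs R s.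
  apply/eqP; rewrite -subr_eq0 (knap2_slack le_m_i0 hpart half_smax v_eq).
  by rewrite tight subrr.
have active : n_active s v = (2 * m + 1)%N.
  rewrite /n_active knap1_tight knap2_tight !eqxx card_eq0_add_card_eq1 h01 /=.
  lia.
by do !split => //; rewrite active addn1.
Qed.
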